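(* Let $x_0(u_0,v_0)$ be a non-developable surface with unit normal $N_0$ and let $x_z(u_1,v_1)$ be a surface such that, on the set $S:=\{(u_0,v_0,u_1,v_1):(x_z(u_1,v_1)-x_0(u_0,v_0))^TN_0(u_0,v_0)=0\}$ (assumed to be a $3$-dimensional submanifold on which $(\partial_{u_1}x_z)^TN_0\,(\partial_{v_1}x_z)^TN_0\neq0$), one has $$(I_3-N_0N_0^T)\big[\partial_{u_1}x_z(\partial_{v_1}x_z)^T+\partial_{v_1}x_z(\partial_{u_1}x_z)^T\big]N_0=(\partial^2_{u_1v_1}x_z)^TN_0\,(x_z-x_0).$$ Then the function $(\partial_{u_1}x_z)^TN_0\,(\partial_{v_1}x_z)^TN_0$ restricted to $S$ depends only on $(u_1,v_1)$, i.e. it is constant as $(u_0,v_0)$ moves along the curve of contact of $x_0$ with the tangent cone from the fixed point $x_z(u_1,v_1)$. Consequently, for any deformation $x^0$ of $x_0$, the leaves $x^1$ of the associated B\''acklund transformation have linear element $|dx^1|^2=|dx_z|^2-4(\partial_{u_1}x_z)^TN_0(\partial_{v_1}x_z)^TN_0\,du_1\,dv_1$, independent of the shape of $x^0$.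
   Context: Work in $\mathbb{C}^3$ with the complex bilinear product $x^Ty$ and $|x|^2:=x^Tx$; a surface is a map with $dx\times\wedge dx\neq0$, a deformation of $x_0$ is a surface $x^0=R_0x_0+t_0$ with $dx^0=R_0dx_0$, $R_0\in\mathbf{SO}_3(\mathbb{C})$. In the setting of the claim, the leaf $x^1$ over a deformation $x^0$ is $x^1=R_0x_z+t_0$ evaluated along a solution of the equation $-(x_z-x_0)^T(\omega_0\times N_0)+2(\partial_{v_1}x_z)^TN_0\,dv_1=0$ with $\omega_0:=N_0\times R_0^{-1}dR_0N_0$, the variables restricted to $S$. *)

From Stdlib Require Import Reals List.
From Coquelicot Require Import Coquelicot.
Set Implicit Arguments.
Open Scope C_scope.

Definition V3 : Type := (C * C * C)%type.
Definition v1 (x : V3) : C := fst (fst x).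
Definition v2 (x : V3) : C := snd (fst x).
Definition v3 (x : V3) : C := snd x.
Definition mk3 (a b c : C) : V3 := (a, b, c).
Definition vadd (x y : V3) : V3 := mk3 (v1 x + v1 y) (v2 x + v2 y) (v3 x + v3 y).
Definition vsub (x y : V3) : V3 := mk3 (v1 x - v1 y) (v2 x - v2 y) (v3 x - v3 y).
Definition vscal (c : C) (x : V3) : V3 := mk3 (c * v1 x) (c * v2 x) (c * v3 x).
Definition vzero : V3 := mk3 (RtoC 0) (RtoC 0) (RtoC 0).
(** x^T y (no complex conjugation) *)
Definition dot (x y : V3) : C := v1 x * v1 y + v2 x * v2 y + v3 x * v3 y.
Definition cross (x y : V3) : V3 :=
  mk3 (v2 x * v3 y - v3 x * v2 y) (v3 x * v1 y - v1 x * v3 y) (v1 x * v2 y - v2 x * v1 y).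

Definition M3 : Type := (V3 * V3 * V3)%type.
Definition r1 (A : M3) : V3 := fst (fst A).
Definition r2 (A : M3) : V3 := snd (fst A).
Definition r3 (A : M3) : V3 := snd A.
Definition mkM (a b c : V3) : M3 := (a, b, c).
Definition mv (A : M3) (x : V3) : V3 := mk3 (dot (r1 A) x) (dot (r2 A) x) (dot (r3 A) x).
Definition trM (A : M3) : M3 :=
  mkM (mk3 (v1 (r1 A)) (v1 (r2 A)) (v1 (r3 A)))
      (mk3 (v2 (r1 A)) (v2 (r2 A)) (v2 (r3 A)))
      (mk3 (v3 (r1 A)) (v3 (r2 A)) (v3 (r3 A))).
Definition mm (A B : M3) : M3 :=
  let Bt := trM B in
  mkM (mv Bt (r1 A)) (mv Bt (r2 A)) (mv Bt (r3 A)).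
Definition idM : M3 :=
  mkM (mk3 (RtoC 1) (RtoC 0) (RtoC 0)) (mk3 (RtoC 0) (RtoC 1) (RtoC 0))
      (mk3 (RtoC 0) (RtoC 0) (RtoC 1)).
Definition detM (A : M3) : C := dot (r1 A) (cross (r2 A) (r3 A)).
Definition SO3 (A : M3) : Prop := mm (trM A) A = idM /\ detM A = RtoC 1.

Definition uncurry2 {T} (f : C -> C -> T) (p : C * C) : T := f (fst p) (snd p).
Definition open2 (D : C -> C -> Prop) : Prop := open (uncurry2 D).

Definition cdiff_at (f : C -> C -> C) (u v : C) : Prop :=
  exists a b : C,
    filterdiff (K := C_AbsRing) (U := prod_NormedModule C_AbsRing C_NormedModule C_NormedModule)
      (V := C_NormedModule)
      (uncurry2 f) (locally (u, v)) (fun h => a * fst h + b * snd h).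

Definition pu (f : C -> C -> C) : C -> C -> C := fun u v => C_derive (fun s => f s v) u.
Definition pv (f : C -> C -> C) : C -> C -> C := fun u v => C_derive (fun t => f u t) v.

Fixpoint iter_partial (l : list bool) (f : C -> C -> C) : C -> C -> C :=
  match l with
  | nil => f
  | true :: l' => pu (iter_partial l' f)
  | false :: l' => pv (iter_partial l' f)
  end.

(** holomorphic on D: all iterated partial derivatives are complex differentiable on D
    (equivalent to holomorphy on the open set D) *)
Definition holo (D : C -> C -> Prop) (f : C -> C -> C) : Prop :=
  forall (l : list bool) (u v : C), D u v -> cdiff_at (iter_partial l f) u v.

Definition holoV (D : C -> C -> Prop) (x : C -> C -> V3) : Prop :=
  holo D (fun u v => v1 (x u v)) /\ holo D (fun u v => v2 (x u v)) /\
  holo D (fun u v => v3 (x u v)).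
Definition holoM (D : C -> C -> Prop) (A : C -> C -> M3) : Prop :=
  holoV D (fun u v => r1 (A u v)) /\ holoV D (fun u v => r2 (A u v)) /\
  holoV D (fun u v => r3 (A u v)).

Definition puV (x : C -> C -> V3) : C -> C -> V3 := fun u v =>
  mk3 (pu (fun a b => v1 (x a b)) u v) (pu (fun a b => v2 (x a b)) u v)
      (pu (fun a b => v3 (x a b)) u v).
Definition pvV (x : C -> C -> V3) : C -> C -> V3 := fun u v =>
  mk3 (pv (fun a b => v1 (x a b)) u v) (pv (fun a b => v2 (x a b)) u v)
      (pv (fun a b => v3 (x a b)) u v).
Definition puM (A : C -> C -> M3) : C -> C -> M3 := fun u v =>
  mkM (puV (fun a b => r1 (A a b)) u v) (puV (fun a b => r2 (A a b)) u v)
      (puV (fun a b => r3 (A a b)) u v).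
Definition pvM (A : C -> C -> M3) : C -> C -> M3 := fun u v =>
  mkM (pvV (fun a b => r1 (A a b)) u v) (pvV (fun a b => r2 (A a b)) u v)
      (pvV (fun a b => r3 (A a b)) u v).

Definition surface (D : C -> C -> Prop) (x : C -> C -> V3) : Prop :=
  open2 D /\ holoV D x /\ forall u v, D u v -> cross (puV x u v) (pvV x u v) <> vzero.

Definition unit_normal (D : C -> C -> Prop) (x N : C -> C -> V3) : Prop :=
  holoV D N /\ forall u v, D u v ->
    dot (N u v) (N u v) = RtoC 1 /\ dot (N u v) (puV x u v) = RtoC 0 /\
    dot (N u v) (pvV x u v) = RtoC 0.

(** non-developable: the second fundamental form is nondegenerate
    (Gauss curvature nonzero) at every point *)
Definition nondevelopable (D : C -> C -> Prop) (x N : C -> C -> V3) : Prop :=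
  forall u v, D u v ->
    dot (puV (puV x) u v) (N u v) * dot (pvV (pvV x) u v) (N u v)
    - dot (pvV (puV x) u v) (N u v) * dot (pvV (puV x) u v) (N u v) <> RtoC 0.

Definition Sfun (x0 N0 xz : C -> C -> V3) (u0 v0 u1 v1 : C) : C :=
  dot (vsub (xz u1 v1) (x0 u0 v0)) (N0 u0 v0).

Definition inS (D0 D1 : C -> C -> Prop) (x0 N0 xz : C -> C -> V3) (u0 v0 u1 v1 : C) : Prop :=
  D0 u0 v0 /\ D1 u1 v1 /\ Sfun x0 N0 xz u0 v0 u1 v1 = RtoC 0.

Definition Ffun (N0 xz : C -> C -> V3) (u0 v0 u1 v1 : C) : C :=
  dot (puV xz u1 v1) (N0 u0 v0) * dot (pvV xz u1 v1) (N0 u0 v0).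

(** the hypothesis
   (I - N0 N0^T)[xz_u xz_v^T + xz_v xz_u^T] N0 = (xz_uv^T N0) (xz - x0) at a point *)
Definition key_identity (x0 N0 xz : C -> C -> V3) (u0 v0 u1 v1 : C) : Prop :=
  let N := N0 u0 v0 in
  let a := puV xz u1 v1 in
  let b := pvV xz u1 v1 in
  let w := vadd (vscal (dot b N) a) (vscal (dot a N) b) in
  vsub w (vscal (dot N w) N) =
  vscal (dot (pvV (puV xz) u1 v1) N) (vsub (xz u1 v1) (x0 u0 v0)).

Definition deformation (D0 : C -> C -> Prop) (x0 : C -> C -> V3)
  (R0 : C -> C -> M3) (t0 : C -> C -> V3) : Prop :=
  holoM D0 R0 /\ holoV D0 t0 /\
  forall u v, D0 u v ->
    SO3 (R0 u v) /\
    puV (fun a b => vadd (mv (R0 a b) (x0 a b)) (t0 a b)) u v = mv (R0 u v) (puV x0 u v) /\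
    pvV (fun a b => vadd (mv (R0 a b) (x0 a b)) (t0 a b)) u v = mv (R0 u v) (pvV x0 u v).

(** coefficients of the 1-form omega_0 = N0 x R0^{-1} dR0 N0 = om_u du0 + om_v dv0
    (for R0 in SO_3(C), R0^{-1} = R0^T) *)
Definition om_u (N0 : C -> C -> V3) (R0 : C -> C -> M3) (u v : C) : V3 :=
  cross (N0 u v) (mv (trM (R0 u v)) (mv (puM R0 u v) (N0 u v))).
Definition om_v (N0 : C -> C -> V3) (R0 : C -> C -> M3) (u v : C) : V3 :=
  cross (N0 u v) (mv (trM (R0 u v)) (mv (pvM R0 u v) (N0 u v))).

Definition pfaff_form (x0 N0 xz : C -> C -> V3) (R0 : C -> C -> M3)
  (u0 v0 u1 v1 du0 dv0 du1 dv1 : C) : C :=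
  let om := vadd (vscal du0 (om_u N0 R0 u0 v0)) (vscal dv0 (om_v N0 R0 u0 v0)) in
  - dot (vsub (xz u1 v1) (x0 u0 v0)) (cross om (N0 u0 v0))
  + RtoC 2 * dot (pvV xz u1 v1) (N0 u0 v0) * dv1.

Definition leaf (D0 D1 : C -> C -> Prop) (x0 N0 xz : C -> C -> V3) (R0 : C -> C -> M3)
  (D : C -> C -> Prop) (U0 V0 U1 V1 : C -> C -> C) : Prop :=
  open2 D /\ holo D U0 /\ holo D V0 /\ holo D U1 /\ holo D V1 /\
  forall s t, D s t ->
    inS D0 D1 x0 N0 xz (U0 s t) (V0 s t) (U1 s t) (V1 s t) /\
    forall al be : C,
      pfaff_form x0 N0 xz R0 (U0 s t) (V0 s t) (U1 s t) (V1 s t)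
        (al * pu U0 s t + be * pv U0 s t) (al * pu V0 s t + be * pv V0 s t)
        (al * pu U1 s t + be * pv U1 s t) (al * pu V1 s t + be * pv V1 s t) = RtoC 0.

Definition x1_leaf (xz : C -> C -> V3) (R0 : C -> C -> M3) (t0 : C -> C -> V3)
  (U0 V0 U1 V1 : C -> C -> C) : C -> C -> V3 := fun s t =>
  vadd (mv (R0 (U0 s t) (V0 s t)) (xz (U1 s t) (V1 s t))) (t0 (U0 s t) (V0 s t)).

From Stdlib Require Import Reals Lra List.
From Coquelicot Require Import Coquelicot.
Open Scope C_scope.

(* With [a = xz_u], [b = xz_v] fixed and [N = N0(u0,v0)] moving, the derivative of
   [F = (a.N)(b.N)] is [(a.dN)(b.N) + (a.N)(b.dN)], and that of the defining function
   [(xz - x0).N] of S is [(xz - x0).dN], since [dx0.N = 0]. Dotting the hypothesis with [dN],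
   which is orthogonal to the unit vector [N], gives [dF = (xz_uv.N) dS]: F is constant along S.

   For a deformation [x^0 = R0 x0 + t0] one has [dt0 = - dR0 x0], hence
   [dx^1 = R0 (w x (xz - x0) + dxz)] with [w] the axial vector of the skew matrix [R0^T dR0].
   The integrability condition [dR0 ^ dx0 = 0] makes [w] tangent to [x0]; then [w] is the
   form [omega0], and [w x (xz - x0) = lam N0] as both factors are tangent on S. The Pfaff
   equation says [lam = -2 (xz_v.N0) dv1], and expanding [|lam N0 + dxz|^2] yields the
   linear element. *)

Lemma Rabs_fst_le_Cmod (w : C) : Rabs (fst w) <= Cmod w.
Proof. eapply Rle_trans; [apply Rmax_l | apply Rmax_Cmod]. Qed.

Lemma Rabs_snd_le_Cmod (w : C) : Rabs (snd w) <= Cmod w.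
Proof. eapply Rle_trans; [apply Rmax_r | apply Rmax_Cmod]. Qed.

Lemma Rabs_Rminus_diag_lt (x : R) (e : posreal) : Rabs (x - x) < e.
Proof. rewrite Rminus_diag, Rabs_R0. apply cond_pos. Qed.

Lemma locally_Rabs_lt (c x d : R) :
  Rabs (x - c) < d -> locally x (fun z : R => Rabs (z - c) < d).
Proof.
  intros H. assert (He : 0 < d - Rabs (x - c)) by lra.
  exists (mkposreal _ He). intros z Hz. change (Rabs (z - x) < d - Rabs (x - c)) in Hz.
  replace (z - c)%R with ((z - x) + (x - c))%R by ring.
  eapply Rle_lt_trans; [apply Rabs_triang | simpl in Hz; lra].
Qed.

(* Coquelicot's generic derivation rules are stated for [AbsRing_NormedModule C_AbsRing],
   which does not unify with [C_NormedModule]. *)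
Lemma is_derive_C_of_AbsRing (f : C -> C) u l :
  @is_derive C_AbsRing (AbsRing_NormedModule C_AbsRing) f u l -> is_derive f u l.
Proof. intros [[L1 L2 L3] H]. split; [split; assumption | exact H]. Qed.

Lemma is_derive_AbsRing_of_C (f : C -> C) u l :
  is_derive f u l -> @is_derive C_AbsRing (AbsRing_NormedModule C_AbsRing) f u l.
Proof. intros [[L1 L2 L3] H]. split; [split; assumption | exact H]. Qed.

Lemma is_derive_C_id (u : C) : is_derive (fun t : C => t) u (RtoC 1).
Proof. apply is_derive_C_of_AbsRing. exact (is_derive_id u). Qed.

Lemma is_derive_C_const (a u : C) : is_derive (fun _ : C => a) u (RtoC 0).
Proof. exact (is_derive_const (V := C_NormedModule) a u). Qed.

Lemma is_derive_C_plus (f g : C -> C) x df dg :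
  is_derive f x df -> is_derive g x dg -> is_derive (fun y => f y + g y) x (df + dg).
Proof. exact (is_derive_plus f g x df dg). Qed.

Lemma is_derive_C_minus (f g : C -> C) x df dg :
  is_derive f x df -> is_derive g x dg -> is_derive (fun y => f y - g y) x (df - dg).
Proof. exact (is_derive_minus f g x df dg). Qed.

Lemma is_derive_C_mult (f g : C -> C) x df dg :
  is_derive f x df -> is_derive g x dg ->
  is_derive (fun y => f y * g y) x (df * g x + f x * dg).
Proof.
  intros H1 H2. apply is_derive_C_of_AbsRing.
  exact (is_derive_mult f g x df dg (is_derive_AbsRing_of_C _ _ _ H1)
           (is_derive_AbsRing_of_C _ _ _ H2) (fun _ _ => Cmult_comm _ _)).
Qed.

Lemma is_derive_C_locally_const (g : C -> C) (x c : C) :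
  @locally C_UniformSpace x (fun y => g y = c) -> is_derive g x (RtoC 0).
Proof.
  intros [e He]. apply (is_derive_ext_loc (fun _ => c)); [|apply is_derive_C_const].
  exists e. intros y Hy. symmetry. apply He, C_NormedModule_mixin_compat1, Hy.
Qed.

Definition is_cdiff (f : C -> C -> C) (u v a b : C) : Prop :=
  filterdiff (K := C_AbsRing) (U := prod_NormedModule C_AbsRing C_NormedModule C_NormedModule)
    (V := C_NormedModule) (uncurry2 f) (locally (u, v)) (fun h => a * fst h + b * snd h).

Lemma filter_prod_locally {U V : UniformSpace} (x : U) (y : V) (P : U * V -> Prop) :
  locally (x, y) P -> filter_prod (locally x) (locally y) P.
Proof.
  intros [eps H]. exists (ball x eps) (ball y eps); try apply locally_ball.
  intros u v Hu Hv. apply H. split; assumption.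
Qed.

Lemma is_derive_comp_cdiff (f : C -> C -> C) (g1 g2 : C -> C) (x a b d1 d2 : C) :
  is_cdiff f (g1 x) (g2 x) a b -> is_derive g1 x d1 -> is_derive g2 x d2 ->
  is_derive (fun y => f (g1 y) (g2 y)) x (a * d1 + b * d2).
Proof.
  intros Hf H1 H2. unfold is_derive. eapply filterdiff_ext_lin.
  - apply (filterdiff_comp_2 (K := C_AbsRing) (T := AbsRing_NormedModule C_AbsRing)
      (U := C_NormedModule) (V := C_NormedModule) (W := C_NormedModule)
      g1 g2 f _ _ (fun p q => a * p + b * q) H1 H2).
    assert (ProperFilter (filtermap (fun t : AbsRing_NormedModule C_AbsRing => (g1 t, g2 t))
                            (locally (x : AbsRing_NormedModule C_AbsRing))))
      by apply filtermap_proper_filter, locally_filter.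
    apply (filterdiff_locally _ (g1 x, g2 x)); [|exact Hf].
    intros P HP. apply filter_prod_locally in HP.
    exact (filterlim_pair g1 g2 (ex_derive_continuous g1 x (ex_intro _ d1 H1))
             (ex_derive_continuous g2 x (ex_intro _ d2 H2)) P HP).
  - intros y. simpl. change (a * (y * d1) + b * (y * d2) = y * (a * d1 + b * d2)). ring.
Qed.

Lemma is_cdiff_pu (f : C -> C -> C) u v a b :
  is_cdiff f u v a b -> is_derive (fun s => f s v) u a.
Proof.
  intros H. replace a with (a * 1 + b * 0) by ring.
  exact (is_derive_comp_cdiff f (fun t => t) (fun _ => v) u a b 1 0 H
           (is_derive_C_id u) (is_derive_C_const v u)).
Qed.

Lemma is_cdiff_pv (f : C -> C -> C) u v a b :
  is_cdiff f u v a b -> is_derive (fun t => f u t) v b.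
Proof.
  intros H. replace b with (a * 0 + b * 1) by ring.
  exact (is_derive_comp_cdiff f (fun _ => u) (fun t => t) v a b 0 1 H
           (is_derive_C_const u v) (is_derive_C_id v)).
Qed.

Lemma cdiff_at_is_cdiff f u v : cdiff_at f u v -> is_cdiff f u v (pu f u v) (pv f u v).
Proof.
  intros [a [b H]].
  replace (pu f u v) with a by (symmetry; apply is_C_derive_unique, (is_cdiff_pu f u v a b H)).
  replace (pv f u v) with b by (symmetry; apply is_C_derive_unique, (is_cdiff_pv f u v a b H)).
  exact H.
Qed.

Lemma cdiff_at_pu f u v : cdiff_at f u v -> is_derive (fun s => f s v) u (pu f u v).
Proof. intros H. exact (is_cdiff_pu _ _ _ _ _ (cdiff_at_is_cdiff f u v H)). Qed.

Lemma cdiff_at_pv f u v : cdiff_at f u v -> is_derive (fun t => f u t) v (pv f u v).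
Proof. intros H. exact (is_cdiff_pv _ _ _ _ _ (cdiff_at_is_cdiff f u v H)). Qed.

Lemma is_derive_comp_cdiff_at (f : C -> C -> C) (g1 g2 : C -> C) (x d1 d2 : C) :
  cdiff_at f (g1 x) (g2 x) -> is_derive g1 x d1 -> is_derive g2 x d2 ->
  is_derive (fun y => f (g1 y) (g2 y)) x
    (pu f (g1 x) (g2 x) * d1 + pv f (g1 x) (g2 x) * d2).
Proof. intros H. apply is_derive_comp_cdiff, cdiff_at_is_cdiff, H. Qed.

Section RealProjection.

(* [P] is [fst] or [snd]: symmetry of complex mixed partials is reduced to the real Schwarz
   theorem for the real and imaginary parts of [f] on a real slice through [(u,v)]. *)
Variable P : C -> R.
Hypothesis P_minus : forall w1 w2, P (w1 - w2) = (P w1 - P w2)%R.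
Hypothesis P_le_Cmod : forall w, Rabs (P w) <= Cmod w.
Hypothesis P_scal : forall (x : R) w, P (RtoC x * w) = (x * P w)%R.
Hypothesis P_ball : forall (w w' : C) (e : R), ball w e w' -> Rabs (P w' - P w) < e.

Lemma is_derive_real_restriction (h : C -> C) (z l : C) :
  is_derive h z l -> is_derive (fun x : R => P (h (x, snd z))) (fst z) (P l).
Proof.
  intros [_ Hd]. apply is_derive_Reals. intros eps Heps.
  assert (He2 : 0 < eps / 2) by lra.
  specialize (Hd z (fun _ H => H) (mkposreal _ He2)).
  apply (locally_le_locally_norm z) in Hd. destruct Hd as [del Hdel].
  exists del. intros hh Hh0 Hhd.
  set (y := ((fst z + hh)%R, snd z) : C).
  assert (Hyz : Cminus y z = RtoC hh).
  { destruct z as [a b]; unfold y, Cminus, Cplus, Copp, RtoC; simpl; f_equal; ring. }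
  assert (Hy : ball z del y).
  { apply C_NormedModule_mixin_compat1. change (Cmod (Cminus y z) < del).
    rewrite Hyz, Cmod_R. exact Hhd. }
  specialize (Hdel y Hy). simpl in Hdel.
  change (Cmod (Cminus (Cminus (h y) (h z)) (Cmult (Cminus y z) l))
          <= eps / 2 * Cmod (Cminus y z)) in Hdel.
  rewrite Hyz, Cmod_R in Hdel.
  pose proof (P_le_Cmod (Cminus (Cminus (h y) (h z)) (Cmult hh l))) as H2.
  rewrite P_minus, P_minus, P_scal in H2.
  assert (Hz : z = (fst z, snd z)) by (destruct z; reflexivity).
  rewrite <- Hz. fold y.
  assert (Habs : 0 < Rabs hh) by (apply Rabs_pos_lt; auto).
  replace ((P (h y) - P (h z)) / hh - P l)%R
    with ((P (h y) - P (h z) - hh * P l) / hh)%R by (field; auto).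
  unfold Rdiv. rewrite Rabs_mult, Rabs_inv.
  apply (Rmult_lt_reg_r (Rabs hh)); auto.
  rewrite Rmult_assoc, Rinv_l by lra. rewrite Rmult_1_r.
  eapply Rle_lt_trans; [apply (Rle_trans _ _ _ H2 Hdel) | nra].
Qed.

Lemma is_derive_slice_u (h : C -> C -> C) (x ui y vi : R) : cdiff_at h (x, ui) (y, vi) ->
  is_derive (fun z : R => P (h (z, ui) (y, vi))) x (P (pu h (x, ui) (y, vi))).
Proof.
  intros H.
  exact (is_derive_real_restriction (fun s => h s (y, vi)) (x, ui) _ (cdiff_at_pu _ _ _ H)).
Qed.

Lemma is_derive_slice_v (h : C -> C -> C) (x ui y vi : R) : cdiff_at h (x, ui) (y, vi) ->
  is_derive (fun z : R => P (h (x, ui) (z, vi))) y (P (pv h (x, ui) (y, vi))).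
Proof.
  intros H.
  exact (is_derive_real_restriction (fun s => h (x, ui) s) (y, vi) _ (cdiff_at_pv _ _ _ H)).
Qed.

Lemma continuity_2d_pt_slice (h : C -> C -> C) (x ui y vi : R) : cdiff_at h (x, ui) (y, vi) ->
  continuity_2d_pt (fun x' y' => P (h (x', ui) (y', vi))) x y.
Proof.
  intros [a [b Hd]] e.
  destruct (filterdiff_continuous (uncurry2 h) ((x, ui), (y, vi)) (ex_intro _ _ Hd) _
              (locally_ball (h (x, ui) (y, vi)) e)) as [del Hdel].
  exists del. intros x' y' Hx Hy. apply P_ball, (Hdel ((x', ui), (y', vi))).
  repeat split; simpl; auto; apply Rabs_Rminus_diag_lt.
Qed.

Lemma pv_pu_proj (D : C -> C -> Prop) (f : C -> C -> C) (u v : C) :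
  open2 D -> holo D f -> D u v -> P (pv (pu f) u v) = P (pu (pv f) u v).
Proof.
  intros Hop Hh Huv. destruct u as [ur ui], v as [vr vi].
  destruct (Hop ((ur, ui), (vr, vi)) Huv) as [eps Heps].
  assert (InD : forall x y, Rabs (x - ur) < eps -> Rabs (y - vr) < eps -> D (x, ui) (y, vi)).
  { intros x y Hx Hy. apply (Heps ((x, ui), (y, vi))).
    repeat split; simpl; auto; apply Rabs_Rminus_diag_lt. }
  set (F := fun x y : R => P (f (x, ui) (y, vi))).
  assert (Fx : forall x y, Rabs (x - ur) < eps -> Rabs (y - vr) < eps ->
     is_derive (fun z => F z y) x (P (pu f (x, ui) (y, vi))))
    by (intros; apply is_derive_slice_u, (Hh nil); auto).
  assert (Fy : forall x y, Rabs (x - ur) < eps -> Rabs (y - vr) < eps ->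
     is_derive (fun z => F x z) y (P (pv f (x, ui) (y, vi))))
    by (intros; apply is_derive_slice_v, (Hh nil); auto).
  assert (Fyx : forall x y, Rabs (x - ur) < eps -> Rabs (y - vr) < eps ->
     is_derive (fun z => Derive (fun t => F z t) y) x (P (pu (pv f) (x, ui) (y, vi)))).
  { intros x y Hx Hy. apply (is_derive_ext_loc (fun z => P (pv f (z, ui) (y, vi)))).
    - generalize (locally_Rabs_lt ur x eps Hx). apply filter_imp. intros z Hz.
      symmetry. apply is_derive_unique, Fy; auto.
    - apply is_derive_slice_u, (Hh (false :: nil)); auto. }
  assert (Fxy : forall x y, Rabs (x - ur) < eps -> Rabs (y - vr) < eps ->
     is_derive (fun z => Derive (fun t => F t z) x) y (P (pv (pu f) (x, ui) (y, vi)))).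
  { intros x y Hx Hy. apply (is_derive_ext_loc (fun z => P (pu f (x, ui) (z, vi)))).
    - generalize (locally_Rabs_lt vr y eps Hy). apply filter_imp. intros z Hz.
      symmetry. apply is_derive_unique, Fx; auto.
    - apply is_derive_slice_v, (Hh (true :: nil)); auto. }
  pose proof (Rabs_Rminus_diag_lt ur eps) as Hur. pose proof (Rabs_Rminus_diag_lt vr eps) as Hvr.
  rewrite <- (is_derive_unique _ _ _ (Fyx ur vr Hur Hvr)),
          <- (is_derive_unique _ _ _ (Fxy ur vr Hur Hvr)).
  symmetry. apply Schwarz.
  - exists eps. intros x y Hx Hy.
    repeat split; eexists; [apply Fx | apply Fy | apply Fyx | apply Fxy]; auto.
  - apply continuity_2d_pt_ext_loc with (f := fun x y => P (pu (pv f) (x, ui) (y, vi))).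
    + exists eps. intros x y Hx Hy. symmetry. apply is_derive_unique, Fyx; auto.
    + apply continuity_2d_pt_slice, (Hh (true :: false :: nil)); auto.
  - apply continuity_2d_pt_ext_loc with (f := fun x y => P (pv (pu f) (x, ui) (y, vi))).
    + exists eps. intros x y Hx Hy. symmetry. apply is_derive_unique, Fxy; auto.
    + apply continuity_2d_pt_slice, (Hh (false :: true :: nil)); auto.
Qed.

End RealProjection.

Lemma pv_pu_comm (D : C -> C -> Prop) (f : C -> C -> C) (u v : C) :
  open2 D -> holo D f -> D u v -> pv (pu f) u v = pu (pv f) u v.
Proof.
  intros Hop Hh Huv. apply injective_projections.
  - refine (pv_pu_proj fst _ Rabs_fst_le_Cmod _ _ D f u v Hop Hh Huv).
    + intros [a b] [c d]; simpl; ring.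
    + intros x [a b]; simpl; ring.
    + intros w w' e [H1 _]; exact H1.
  - refine (pv_pu_proj snd _ Rabs_snd_le_Cmod _ _ D f u v Hop Hh Huv).
    + intros [a b] [c d]; simpl; ring.
    + intros x [a b]; simpl; ring.
    + intros w w' e [_ H2]; exact H2.
Qed.

Lemma iter_partial_pu l f : iter_partial l (pu f) = iter_partial (l ++ true :: nil) f.
Proof. induction l as [|[] l IH]; simpl; rewrite ?IH; reflexivity. Qed.

Lemma iter_partial_pv l f : iter_partial l (pv f) = iter_partial (l ++ false :: nil) f.
Proof. induction l as [|[] l IH]; simpl; rewrite ?IH; reflexivity. Qed.

Lemma holo_pu D f : holo D f -> holo D (pu f).
Proof. intros H l u v Hd. rewrite iter_partial_pu. auto. Qed.

Lemma holo_pv D f : holo D f -> holo D (pv f).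
Proof. intros H l u v Hd. rewrite iter_partial_pv. auto. Qed.

Lemma open2_locally_u D u v : open2 D -> D u v -> locally u (fun s => D s v).
Proof.
  intros Hop Hd. destruct (Hop (u, v) Hd) as [e He]. exists e. intros s Hs.
  apply (He (s, v)). split; [exact Hs | apply ball_center].
Qed.

Lemma open2_locally_v D u v : open2 D -> D u v -> locally v (fun t => D u t).
Proof.
  intros Hop Hd. destruct (Hop (u, v) Hd) as [e He]. exists e. intros t Ht.
  apply (He (u, t)). split; [apply ball_center | exact Ht].
Qed.

Definition madd (A B : M3) : M3 :=
  mkM (vadd (r1 A) (r1 B)) (vadd (r2 A) (r2 B)) (vadd (r3 A) (r3 B)).
Definition zeroM : M3 := mkM vzero vzero vzero.
Definition mlin (c1 : C) (A1 : M3) (c2 : C) (A2 : M3) : M3 :=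
  mkM (vadd (vscal c1 (r1 A1)) (vscal c2 (r1 A2)))
      (vadd (vscal c1 (r2 A1)) (vscal c2 (r2 A2)))
      (vadd (vscal c1 (r3 A1)) (vscal c2 (r3 A2))).
Definition adjM (A : M3) : M3 :=
  trM (mkM (cross (r2 A) (r3 A)) (cross (r3 A) (r1 A)) (cross (r1 A) (r2 A))).
(* the vector [w] with [W y = w x y] when [W] is skew-symmetric *)
Definition axial (W : M3) : V3 := mk3 (v2 (r3 W)) (v3 (r1 W)) (v1 (r2 W)).

Lemma V3_pair_eq (a b c d e f : C) : a = d -> b = e -> c = f -> (((a, b), c) : V3) = ((d, e), f).
Proof. intros; subst; reflexivity. Qed.

Lemma M3_pair_eq (a b c d e f g h i a' b' c' d' e' f' g' h' i' : C) :
  a = a' -> b = b' -> c = c' -> d = d' -> e = e' -> f = f' -> g = g' -> h = h' -> i = i' ->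
  (((((a, b), c), ((d, e), f)), ((g, h), i)) : M3) =
  ((((a', b'), c'), ((d', e'), f')), ((g', h'), i')).
Proof. intros; subst; reflexivity. Qed.

Ltac vec_unfold :=
  repeat match goal with
  | v : V3 |- _ => destruct v as [[? ?] ?]
  | A : M3 |- _ => destruct A as [[? ?] ?]
  end;
  cbv beta iota zeta delta [madd zeroM mlin adjM axial vadd vsub vscal vzero dot cross mv trM mm
    idM detM mk3 mkM r1 r2 r3 v1 v2 v3 fst snd].

Ltac vec_ring := vec_unfold; first [apply M3_pair_eq | apply V3_pair_eq | idtac]; ring.

Lemma V3_eta (x : V3) : mk3 (v1 x) (v2 x) (v3 x) = x.
Proof. destruct x as [[a b] c]; reflexivity. Qed.

Definition is_derive_V (p : C -> V3) (s : C) (p' : V3) : Prop :=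
  is_derive (fun y => v1 (p y)) s (v1 p') /\ is_derive (fun y => v2 (p y)) s (v2 p') /\
  is_derive (fun y => v3 (p y)) s (v3 p').

Definition is_derive_M (A : C -> M3) (s : C) (A' : M3) : Prop :=
  is_derive_V (fun y => r1 (A y)) s (r1 A') /\ is_derive_V (fun y => r2 (A y)) s (r2 A') /\
  is_derive_V (fun y => r3 (A y)) s (r3 A').

Lemma is_derive_C_eq (f : C -> C) x (l l' : C) : is_derive f x l -> l = l' -> is_derive f x l'.
Proof. intros H <-. exact H. Qed.

Lemma is_derive_V_eq p s p' p'' : is_derive_V p s p' -> p' = p'' -> is_derive_V p s p''.
Proof. intros H <-. exact H. Qed.

Lemma is_derive_V_const (c : V3) s : is_derive_V (fun _ => c) s vzero.
Proof. split; [|split]; apply is_derive_C_const. Qed.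

Lemma is_derive_V_plus p q s p' q' : is_derive_V p s p' -> is_derive_V q s q' ->
  is_derive_V (fun y => vadd (p y) (q y)) s (vadd p' q').
Proof.
  intros [H1 [H2 H3]] [G1 [G2 G3]].
  split; [|split]; apply is_derive_C_plus; assumption.
Qed.

Lemma is_derive_V_minus p q s p' q' : is_derive_V p s p' -> is_derive_V q s q' ->
  is_derive_V (fun y => vsub (p y) (q y)) s (vsub p' q').
Proof.
  intros [H1 [H2 H3]] [G1 [G2 G3]].
  split; [|split]; apply is_derive_C_minus; assumption.
Qed.

Lemma is_derive_V_dot p q s p' q' : is_derive_V p s p' -> is_derive_V q s q' ->
  is_derive (fun y => dot (p y) (q y)) s (dot p' (q s) + dot (p s) q').
Proof.
  intros [H1 [H2 H3]] [G1 [G2 G3]]. eapply is_derive_C_eq.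
  - exact (is_derive_C_plus _ _ _ _ _
      (is_derive_C_plus _ _ _ _ _ (is_derive_C_mult _ _ _ _ _ H1 G1)
                                (is_derive_C_mult _ _ _ _ _ H2 G2))
      (is_derive_C_mult _ _ _ _ _ H3 G3)).
  - unfold dot. ring.
Qed.

Lemma is_derive_V_mv A p s A' p' : is_derive_M A s A' -> is_derive_V p s p' ->
  is_derive_V (fun y => mv (A y) (p y)) s (vadd (mv A' (p s)) (mv (A s) p')).
Proof.
  intros [H1 [H2 H3]] G.
  split; [|split]; [exact (is_derive_V_dot _ _ _ _ _ H1 G) | exact (is_derive_V_dot _ _ _ _ _ H2 G)
                   | exact (is_derive_V_dot _ _ _ _ _ H3 G)].
Qed.

Lemma is_derive_M_tr A s A' : is_derive_M A s A' -> is_derive_M (fun y => trM (A y)) s (trM A').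
Proof.
  intros [[a1 [a2 a3]] [[b1 [b2 b3]] [c1 [c2 c3]]]].
  split; [|split]; split; [|split| |split| |split]; assumption.
Qed.

Lemma is_derive_M_mm A B s A' B' : is_derive_M A s A' -> is_derive_M B s B' ->
  is_derive_M (fun y => mm (A y) (B y)) s (madd (mm A' (B s)) (mm (A s) B')).
Proof.
  intros [H1 [H2 H3]] HB. apply is_derive_M_tr in HB.
  split; [|split].
  - eapply is_derive_V_eq; [exact (is_derive_V_mv _ _ _ _ _ HB H1) |].
    cbv beta; generalize (A s) (B s); intros; vec_ring.
  - eapply is_derive_V_eq; [exact (is_derive_V_mv _ _ _ _ _ HB H2) |].
    cbv beta; generalize (A s) (B s); intros; vec_ring.
  - eapply is_derive_V_eq; [exact (is_derive_V_mv _ _ _ _ _ HB H3) |].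
    cbv beta; generalize (A s) (B s); intros; vec_ring.
Qed.

Lemma is_derive_V_locally_const G s G' c : is_derive_V G s G' ->
  @locally C_UniformSpace s (fun y => G y = c) -> G' = vzero.
Proof.
  intros [H1 [H2 H3]] Hl.
  assert (Z : forall pr : V3 -> C, @locally C_UniformSpace s (fun y => pr (G y) = pr c))
    by (intros pr; generalize Hl; apply filter_imp; intros y ->; reflexivity).
  rewrite <- (V3_eta G').
  rewrite <- (is_C_derive_unique _ _ _ H1), <- (is_C_derive_unique _ _ _ H2),
          <- (is_C_derive_unique _ _ _ H3).
  rewrite !(is_C_derive_unique _ _ _ (is_derive_C_locally_const _ _ _ (Z _))).
  reflexivity.
Qed.

Lemma is_derive_M_locally_const G s G' c : is_derive_M G s G' ->
  @locally C_UniformSpace s (fun y => G y = c) -> G' = zeroM.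
Proof.
  intros [H1 [H2 H3]] Hl.
  assert (Z : forall pr : M3 -> V3, @locally C_UniformSpace s (fun y => pr (G y) = pr c))
    by (intros pr; generalize Hl; apply filter_imp; intros y ->; reflexivity).
  apply (fun H => is_derive_V_locally_const _ _ _ _ H (Z r1)) in H1.
  apply (fun H => is_derive_V_locally_const _ _ _ _ H (Z r2)) in H2.
  apply (fun H => is_derive_V_locally_const _ _ _ _ H (Z r3)) in H3.
  destruct G' as [[g1 g2] g3]. unfold r1, r2, r3 in *; simpl in *. subst. reflexivity.
Qed.

Lemma puV_unique (x : C -> C -> V3) u v L : is_derive_V (fun s => x s v) u L -> puV x u v = L.
Proof.
  intros [H1 [H2 H3]]. rewrite <- (V3_eta L). unfold puV, pu.
  f_equal; apply is_C_derive_unique; assumption.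
Qed.

Lemma pvV_unique (x : C -> C -> V3) u v L : is_derive_V (fun t => x u t) v L -> pvV x u v = L.
Proof.
  intros [H1 [H2 H3]]. rewrite <- (V3_eta L). unfold pvV, pv.
  f_equal; apply is_C_derive_unique; assumption.
Qed.

Lemma holoV_pu D x : holoV D x -> holoV D (puV x).
Proof. intros [H1 [H2 H3]]. split; [|split]; apply holo_pu; assumption. Qed.

Lemma holoV_pv D x : holoV D x -> holoV D (pvV x).
Proof. intros [H1 [H2 H3]]. split; [|split]; apply holo_pv; assumption. Qed.

Lemma holoM_pu D A : holoM D A -> holoM D (puM A).
Proof. intros [H1 [H2 H3]]. split; [|split]; apply holoV_pu; assumption. Qed.

Lemma holoM_pv D A : holoM D A -> holoM D (pvM A).
Proof. intros [H1 [H2 H3]]. split; [|split]; apply holoV_pv; assumption. Qed.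

Lemma is_derive_V_pu D x u v : holoV D x -> D u v -> is_derive_V (fun s => x s v) u (puV x u v).
Proof.
  intros [H1 [H2 H3]] Hd.
  split; [|split]; [exact (cdiff_at_pu _ u v (H1 nil u v Hd))
                   | exact (cdiff_at_pu _ u v (H2 nil u v Hd))
                   | exact (cdiff_at_pu _ u v (H3 nil u v Hd))].
Qed.

Lemma is_derive_V_pv D x u v : holoV D x -> D u v -> is_derive_V (fun t => x u t) v (pvV x u v).
Proof.
  intros [H1 [H2 H3]] Hd.
  split; [|split]; [exact (cdiff_at_pv _ u v (H1 nil u v Hd))
                   | exact (cdiff_at_pv _ u v (H2 nil u v Hd))
                   | exact (cdiff_at_pv _ u v (H3 nil u v Hd))].
Qed.

Lemma is_derive_M_pu D A u v : holoM D A -> D u v -> is_derive_M (fun s => A s v) u (puM A u v).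
Proof.
  intros [H1 [H2 H3]] Hd.
  split; [|split]; [apply (is_derive_V_pu D (fun a b => r1 (A a b)))
    | apply (is_derive_V_pu D (fun a b => r2 (A a b)))
    | apply (is_derive_V_pu D (fun a b => r3 (A a b)))]; assumption.
Qed.

Lemma is_derive_M_pv D A u v : holoM D A -> D u v -> is_derive_M (fun t => A u t) v (pvM A u v).
Proof.
  intros [H1 [H2 H3]] Hd.
  split; [|split]; [apply (is_derive_V_pv D (fun a b => r1 (A a b)))
    | apply (is_derive_V_pv D (fun a b => r2 (A a b)))
    | apply (is_derive_V_pv D (fun a b => r3 (A a b)))]; assumption.
Qed.

Lemma is_derive_V_comp D x (g1 g2 : C -> C) (s d1 d2 : C) :
  holoV D x -> D (g1 s) (g2 s) -> is_derive g1 s d1 -> is_derive g2 s d2 ->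
  is_derive_V (fun y => x (g1 y) (g2 y)) s
    (vadd (vscal d1 (puV x (g1 s) (g2 s))) (vscal d2 (pvV x (g1 s) (g2 s)))).
Proof.
  intros [H1 [H2 H3]] Hd G1 G2.
  split; [|split]; eapply is_derive_C_eq.
  - exact (is_derive_comp_cdiff_at _ g1 g2 s d1 d2 (H1 nil _ _ Hd) G1 G2).
  - cbn [iter_partial]. unfold puV, pvV. vec_unfold. ring.
  - exact (is_derive_comp_cdiff_at _ g1 g2 s d1 d2 (H2 nil _ _ Hd) G1 G2).
  - cbn [iter_partial]. unfold puV, pvV. vec_unfold. ring.
  - exact (is_derive_comp_cdiff_at _ g1 g2 s d1 d2 (H3 nil _ _ Hd) G1 G2).
  - cbn [iter_partial]. unfold puV, pvV. vec_unfold. ring.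
Qed.

Lemma is_derive_M_comp D A (g1 g2 : C -> C) (s d1 d2 : C) :
  holoM D A -> D (g1 s) (g2 s) -> is_derive g1 s d1 -> is_derive g2 s d2 ->
  is_derive_M (fun y => A (g1 y) (g2 y)) s
    (mlin d1 (puM A (g1 s) (g2 s)) d2 (pvM A (g1 s) (g2 s))).
Proof.
  intros [H1 [H2 H3]] Hd G1 G2.
  split; [|split]; [apply (is_derive_V_comp D (fun a b => r1 (A a b)))
    | apply (is_derive_V_comp D (fun a b => r2 (A a b)))
    | apply (is_derive_V_comp D (fun a b => r3 (A a b)))]; assumption.
Qed.

Lemma pvV_puV_comm D x u v : open2 D -> holoV D x -> D u v -> pvV (puV x) u v = puV (pvV x) u v.
Proof.
  intros Hop [H1 [H2 H3]] Hd. unfold pvV, puV, v1, v2, v3, mk3. cbn [fst snd].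
  f_equal; [f_equal|]; eapply pv_pu_comm; eassumption.
Qed.

Lemma pvM_puM_comm D A u v : open2 D -> holoM D A -> D u v -> pvM (puM A) u v = puM (pvM A) u v.
Proof.
  intros Hop [H1 [H2 H3]] Hd. unfold pvM, puM, r1, r2, r3, mkM. cbn [fst snd].
  f_equal; [f_equal|]; eapply pvV_puV_comm; eassumption.
Qed.

Lemma Cplus_diag_eq0 (x : C) : x + x = RtoC 0 -> x = RtoC 0.
Proof.
  intros H. assert (H2 : RtoC 2 <> RtoC 0) by (intro E; apply RtoC_inj in E; lra).
  replace x with ((x + x) / RtoC 2) by (field; exact H2).
  rewrite H. unfold Cdiv. ring.
Qed.

Lemma dot_derivative_unit (n : C -> V3) s n' : is_derive_V n s n' ->
  @locally C_UniformSpace s (fun y => dot (n y) (n y) = RtoC 1) -> dot (n s) n' = RtoC 0.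
Proof.
  intros Hn Hunit. apply Cplus_diag_eq0.
  transitivity (dot n' (n s) + dot (n s) n'); [clear; vec_ring |].
  rewrite <- (is_C_derive_unique _ _ _ (is_derive_V_dot _ _ _ _ _ Hn Hn)).
  apply is_C_derive_unique, (is_derive_C_locally_const _ _ _ Hunit).
Qed.

Lemma unit_normal_dot_pu D x N u v : open2 D -> unit_normal D x N -> D u v ->
  dot (N u v) (puV N u v) = RtoC 0.
Proof.
  intros Hop [HN Hunit] Hd. apply (dot_derivative_unit (fun s => N s v)).
  - exact (is_derive_V_pu D N u v HN Hd).
  - generalize (open2_locally_u D u v Hop Hd). apply filter_imp. intros s Hs. apply (Hunit s v Hs).
Qed.

Lemma unit_normal_dot_pv D x N u v : open2 D -> unit_normal D x N -> D u v ->
  dot (N u v) (pvV N u v) = RtoC 0.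
Proof.
  intros Hop [HN Hunit] Hd. apply (dot_derivative_unit (fun t => N u t)).
  - exact (is_derive_V_pv D N u v HN Hd).
  - generalize (open2_locally_v D u v Hop Hd). apply filter_imp. intros t Ht. apply (Hunit u t Ht).
Qed.

(* Dotting the key identity with [N'] orthogonal to [N] kills its [N N^T] term. *)
Lemma key_identity_dot (N a b c z X N' X' : V3) :
  dot N N' = RtoC 0 -> dot N X' = RtoC 0 ->
  (let w := vadd (vscal (dot b N) a) (vscal (dot a N) b) in
   vsub w (vscal (dot N w) N) = vscal (dot c N) (vsub z X)) ->
  dot a N' * dot b N + dot a N * dot b N' =
  dot c N * (dot (vsub vzero X') N + dot (vsub z X) N').
Proof.
  intros HN HX K. cbv zeta in K.
  set (w := vadd (vscal (dot b N) a) (vscal (dot a N) b)) in K.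
  transitivity (dot (vsub w (vscal (dot N w) N)) N' + dot N w * dot N N');
    [unfold w; clear; vec_ring |].
  rewrite K, HN.
  replace (dot (vsub vzero X') N) with (- dot N X') by (clear; vec_ring).
  rewrite HX. clear; vec_ring.
Qed.

Lemma contact_derivative (n x : C -> V3) (a b c z : V3) s n' x' :
  is_derive_V n s n' -> is_derive_V x s x' ->
  dot (n s) n' = RtoC 0 -> dot (n s) x' = RtoC 0 ->
  (let w := vadd (vscal (dot b (n s)) a) (vscal (dot a (n s)) b) in
   vsub w (vscal (dot (n s) w) (n s)) = vscal (dot c (n s)) (vsub z (x s))) ->
  C_derive (fun r => dot a (n r) * dot b (n r)) s =
  dot c (n s) * C_derive (fun r => dot (vsub z (x r)) (n r)) s.
Proof.
  intros Hn Hx HN HX K.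
  rewrite (is_C_derive_unique (fun r => dot a (n r) * dot b (n r)) s _
             (is_derive_C_mult _ _ _ _ _
                (is_derive_V_dot _ _ _ _ _ (is_derive_V_const a s) Hn)
                (is_derive_V_dot _ _ _ _ _ (is_derive_V_const b s) Hn))),
          (is_C_derive_unique (fun r => dot (vsub z (x r)) (n r)) s _
             (is_derive_V_dot _ _ _ _ _
                (is_derive_V_minus _ _ _ _ _ (is_derive_V_const z s) Hx) Hn)).
  rewrite <- (key_identity_dot (n s) a b c z (x s) n' x' HN HX K).
  clear; vec_ring.
Qed.

Lemma Ffun_derive_u D0 x0 N0 xz u0 v0 u1 v1 :
  open2 D0 -> holoV D0 x0 -> unit_normal D0 x0 N0 -> D0 u0 v0 ->
  key_identity x0 N0 xz u0 v0 u1 v1 ->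
  C_derive (fun s => Ffun N0 xz s v0 u1 v1) u0 =
  dot (pvV (puV xz) u1 v1) (N0 u0 v0) * C_derive (fun s => Sfun x0 N0 xz s v0 u1 v1) u0.
Proof.
  intros Hop Hx Hun Hd K. pose proof Hun as [HN Hunit].
  exact (contact_derivative (fun s => N0 s v0) (fun s => x0 s v0) _ _ _ _ u0 _ _
           (is_derive_V_pu D0 N0 u0 v0 HN Hd) (is_derive_V_pu D0 x0 u0 v0 Hx Hd)
           (unit_normal_dot_pu D0 x0 N0 u0 v0 Hop Hun Hd) (proj1 (proj2 (Hunit u0 v0 Hd))) K).
Qed.

Lemma Ffun_derive_v D0 x0 N0 xz u0 v0 u1 v1 :
  open2 D0 -> holoV D0 x0 -> unit_normal D0 x0 N0 -> D0 u0 v0 ->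
  key_identity x0 N0 xz u0 v0 u1 v1 ->
  C_derive (fun t => Ffun N0 xz u0 t u1 v1) v0 =
  dot (pvV (puV xz) u1 v1) (N0 u0 v0) * C_derive (fun t => Sfun x0 N0 xz u0 t u1 v1) v0.
Proof.
  intros Hop Hx Hun Hd K. pose proof Hun as [HN Hunit].
  exact (contact_derivative (fun t => N0 u0 t) (fun t => x0 u0 t) _ _ _ _ v0 _ _
           (is_derive_V_pv D0 N0 u0 v0 HN Hd) (is_derive_V_pv D0 x0 u0 v0 Hx Hd)
           (unit_normal_dot_pv D0 x0 N0 u0 v0 Hop Hun Hd) (proj2 (proj2 (Hunit u0 v0 Hd))) K).
Qed.

Definition skew (W : M3) : Prop := madd (trM W) W = zeroM.

Lemma mm_assoc A B D : mm A (mm B D) = mm (mm A B) D.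
Proof. vec_ring. Qed.

Lemma mm_idM_l A : mm idM A = A.
Proof. vec_ring. Qed.

Lemma mm_idM_r A : mm A idM = A.
Proof. vec_ring. Qed.

Lemma mv_mm A B y : mv (mm A B) y = mv A (mv B y).
Proof. vec_ring. Qed.

(* [R (adj R) = (det R) I], so the adjugate is a right inverse, hence equals the left
   inverse [R^T]. *)
Lemma orthogonal_mm_trM_r (R : M3) : mm (trM R) R = idM -> detM R = RtoC 1 -> mm R (trM R) = idM.
Proof.
  intros HRR Hdet.
  assert (Hadj : mm R (adjM R) = idM).
  { transitivity (mlin (detM R) idM (RtoC 0) idM); [clear; vec_ring |].
    rewrite Hdet. vec_ring. }
  replace (trM R) with (adjM R); [exact Hadj |].
  rewrite <- (mm_idM_r (trM R)), <- Hadj, mm_assoc, HRR, mm_idM_l. reflexivity.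
Qed.

Lemma orthogonal_dot_mv (R : M3) y : mm (trM R) R = idM -> dot (mv R y) (mv R y) = dot y y.
Proof.
  intros HRR. transitivity (dot y (mv (mm (trM R) R) y)); [clear; vec_ring |].
  rewrite HRR. clear; vec_ring.
Qed.

Lemma skew_mm_trM (R A : M3) : madd (mm (trM A) R) (mm (trM R) A) = zeroM -> skew (mm (trM R) A).
Proof. unfold skew. intros <-. vec_ring. Qed.

Lemma Cplus_eq0_opp (a b : C) : a + b = RtoC 0 -> a = - b.
Proof. intros H. replace a with ((a + b) - b) by ring. rewrite H. ring. Qed.

Lemma vadd_eq0_cancel (a p q T : V3) :
  vadd (vadd a p) T = vzero -> vadd (vadd a q) T = vzero -> p = q.
Proof.
  intros Hp Hq. transitivity (vadd (vsub (vadd (vadd a p) T) (vadd (vadd a q) T)) q);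
    [clear; vec_ring |].
  rewrite Hp, Hq. clear; vec_ring.
Qed.

Lemma skew_mv (W : M3) y : skew W -> mv W y = cross (axial W) y.
Proof.
  unfold skew. destruct W as [[[[w11 w12] w13] [[w21 w22] w23]] [[w31 w32] w33]].
  intros H.
  pose proof (f_equal (fun M => v1 (r1 M)) H) as E11.
  pose proof (f_equal (fun M => v2 (r2 M)) H) as E22.
  pose proof (f_equal (fun M => v3 (r3 M)) H) as E33.
  pose proof (f_equal (fun M => v2 (r1 M)) H) as E12.
  pose proof (f_equal (fun M => v3 (r1 M)) H) as E13.
  pose proof (f_equal (fun M => v3 (r2 M)) H) as E23.
  clear H.
  cbv beta iota zeta delta [madd zeroM trM vadd vzero mk3 mkM r1 r2 r3 v1 v2 v3 fst snd]
    in E11, E22, E33, E12, E13, E23.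
  apply Cplus_diag_eq0 in E11, E22, E33.
  apply Cplus_eq0_opp in E12, E13, E23.
  subst. vec_ring.
Qed.

Lemma cross_skew_mv (W : M3) (N : V3) : skew W -> dot N N = RtoC 1 -> dot (axial W) N = RtoC 0 ->
  cross N (mv W N) = axial W.
Proof.
  intros HW HNN HwN. rewrite skew_mv by exact HW.
  transitivity (vsub (vscal (dot N N) (axial W)) (vscal (dot (axial W) N) N)); [clear; vec_ring |].
  rewrite HNN, HwN. clear; vec_ring.
Qed.

Lemma dot_vadd_vscal_eq0 (c1 c2 : C) (w1 w2 N : V3) :
  dot w1 N = RtoC 0 -> dot w2 N = RtoC 0 -> dot (vadd (vscal c1 w1) (vscal c2 w2)) N = RtoC 0.
Proof.
  intros H1 H2. transitivity (c1 * dot w1 N + c2 * dot w2 N); [clear; vec_ring |].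
  rewrite H1, H2. ring.
Qed.

Lemma parallel_unit (N n : V3) : dot N N = RtoC 1 -> cross n N = vzero -> n = vscal (dot N n) N.
Proof.
  intros HNN Hn.
  transitivity (vsub (vscal (dot N N) n) (cross N (cross n N)));
    [rewrite HNN, Hn; clear; vec_ring |].
  clear; vec_ring.
Qed.

Lemma cross_orthogonal (A B N : V3) :
  dot N A = RtoC 0 -> dot N B = RtoC 0 -> cross (cross A B) N = vzero.
Proof.
  intros HA HB. transitivity (vsub (vscal (dot N A) B) (vscal (dot N B) A)); [clear; vec_ring |].
  rewrite HA, HB. clear; vec_ring.
Qed.

Lemma Cmult_eq0_r (a b : C) : a * b = RtoC 0 -> a <> RtoC 0 -> b = RtoC 0.
Proof.
  intros H Ha. replace b with ((a * b) / a) by (field; exact Ha).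
  rewrite H. unfold Cdiv. ring.
Qed.

Lemma dot_unit_normal_eq0 (N Xu Xv w : V3) :
  dot N N = RtoC 1 -> dot N Xu = RtoC 0 -> dot N Xv = RtoC 0 -> cross Xu Xv <> vzero ->
  dot w (cross Xu Xv) = RtoC 0 -> dot w N = RtoC 0.
Proof.
  intros HNN HXu HXv Hn Hw.
  assert (Hpar := parallel_unit N _ HNN (cross_orthogonal Xu Xv N HXu HXv)).
  apply (Cmult_eq0_r (dot N (cross Xu Xv))).
  - rewrite <- Hw. rewrite Hpar at 2. clear; vec_ring.
  - intros E. apply Hn. rewrite Hpar, E. clear; vec_ring.
Qed.

(* The compatibility [Ru Xv = Rv Xu] of [dx^0 = R dx0], read through [Wu = R^T Ru] and
   [Wv = R^T Rv], says [wu x Xv = wv x Xu]; dotting with [Xu] resp. [Xv] gives this. *)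
Lemma skew_axial_orthogonal (R Ru Rv : M3) (Xu Xv : V3) :
  skew (mm (trM R) Ru) -> skew (mm (trM R) Rv) -> mv Ru Xv = mv Rv Xu ->
  dot (axial (mm (trM R) Ru)) (cross Xu Xv) = RtoC 0 /\
  dot (axial (mm (trM R) Rv)) (cross Xu Xv) = RtoC 0.
Proof.
  intros Hu Hv Hcomp.
  assert (Transpose : forall A x y, dot x (mv (mm (trM R) A) y) = dot (mv R x) (mv A y))
    by (clear; intros; vec_ring).
  assert (Eu := Transpose Ru Xu Xv). assert (Ev := Transpose Rv Xv Xu).
  assert (Eu' := Transpose Rv Xu Xu). assert (Ev' := Transpose Ru Xv Xv).
  rewrite skew_mv in Eu, Ev, Eu', Ev' by assumption.
  rewrite Hcomp in Eu. rewrite <- Hcomp in Ev.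
  set (Wu := mm (trM R) Ru) in *. set (Wv := mm (trM R) Rv) in *.
  split.
  - replace (dot (axial Wu) (cross Xu Xv)) with (- dot Xu (cross (axial Wu) Xv))
      by (clear; vec_ring).
    rewrite Eu, <- Eu'. clear; vec_ring.
  - replace (dot (axial Wv) (cross Xu Xv)) with (dot Xv (cross (axial Wv) Xu))
      by (clear; vec_ring).
    rewrite Ev, <- Ev'. clear; vec_ring.
Qed.

Lemma frame_differential (R Ru Rv : M3) (X Tu Tv z dz : V3) (du0 dv0 : C) :
  mm R (trM R) = idM -> skew (mm (trM R) Ru) -> skew (mm (trM R) Rv) ->
  vadd (mv Ru X) Tu = vzero -> vadd (mv Rv X) Tv = vzero ->
  vadd (vadd (mv (mlin du0 Ru dv0 Rv) z) (mv R dz)) (vadd (vscal du0 Tu) (vscal dv0 Tv)) =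
  mv R (vadd (cross (vadd (vscal du0 (axial (mm (trM R) Ru))) (vscal dv0 (axial (mm (trM R) Rv))))
                    (vsub z X)) dz).
Proof.
  intros HRRt Hu Hv HTu HTv.
  replace Tu with (vsub (vadd (mv Ru X) Tu) (mv Ru X)) by (clear; vec_ring).
  replace Tv with (vsub (vadd (mv Rv X) Tv) (mv Rv X)) by (clear; vec_ring).
  rewrite HTu, HTv.
  transitivity (vadd (mv (mlin du0 (mm (mm R (trM R)) Ru) dv0 (mm (mm R (trM R)) Rv)) (vsub z X))
                     (mv R dz)).
  { rewrite HRRt, !mm_idM_l. clear; vec_ring. }
  transitivity (mv R (vadd (vadd (vscal du0 (cross (axial (mm (trM R) Ru)) (vsub z X)))
                                 (vscal dv0 (cross (axial (mm (trM R) Rv)) (vsub z X)))) dz));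
    [| clear; vec_ring].
  rewrite <- !skew_mv by assumption. clear; vec_ring.
Qed.

Lemma linear_element_rotation (R : M3) (om y N a b : V3) (du1 dv1 : C) :
  mm (trM R) R = idM -> dot N N = RtoC 1 -> dot om N = RtoC 0 -> dot y N = RtoC 0 ->
  - dot y (cross om N) + RtoC 2 * dot b N * dv1 = RtoC 0 ->
  dot (mv R (vadd (cross om y) (vadd (vscal du1 a) (vscal dv1 b))))
      (mv R (vadd (cross om y) (vadd (vscal du1 a) (vscal dv1 b)))) =
  dot (vadd (vscal du1 a) (vscal dv1 b)) (vadd (vscal du1 a) (vscal dv1 b))
  - RtoC 4 * (dot a N * dot b N) * du1 * dv1.
Proof.
  intros HRR HNN HomN HyN Hpfaff.
  rewrite orthogonal_dot_mv by exact HRR.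
  assert (Hpar : cross om y = vscal (dot N (cross om y)) N).
  { apply parallel_unit, cross_orthogonal; [exact HNN | rewrite <- HomN | rewrite <- HyN];
      clear; vec_ring. }
  assert (Hlam : dot N (cross om y) = - (RtoC 2 * dot b N * dv1)).
  { apply Cplus_eq0_opp. rewrite <- Hpfaff. clear; vec_ring. }
  rewrite Hpar. set (lam := dot N (cross om y)) in *. clearbody lam.
  transitivity (lam * lam * dot N N + RtoC 2 * lam * (du1 * dot a N + dv1 * dot b N)
                + dot (vadd (vscal du1 a) (vscal dv1 b)) (vadd (vscal du1 a) (vscal dv1 b)));
    [clear; vec_ring |].
  rewrite HNN, Hlam. ring.
Qed.

Section Deformation.

Variables (D0 : C -> C -> Prop) (x0 : C -> C -> V3) (R0 : C -> C -> M3) (t0 : C -> C -> V3).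
Hypotheses (HD0 : open2 D0) (Hx0 : holoV D0 x0) (Hdef : deformation D0 x0 R0 t0).

Lemma deformation_translation_pu u v : D0 u v ->
  vadd (mv (puM R0 u v) (x0 u v)) (puV t0 u v) = vzero.
Proof.
  intros Huv. destruct Hdef as [HR [Ht Hd]]. destruct (Hd u v Huv) as [_ [Eu _]].
  rewrite (puV_unique (fun a b => vadd (mv (R0 a b) (x0 a b)) (t0 a b)) u v _
            (is_derive_V_plus _ _ _ _ _
               (is_derive_V_mv _ _ _ _ _ (is_derive_M_pu D0 R0 u v HR Huv)
                                         (is_derive_V_pu D0 x0 u v Hx0 Huv))
               (is_derive_V_pu D0 t0 u v Ht Huv))) in Eu.
  transitivity (vsub (vadd (vadd (mv (puM R0 u v) (x0 u v)) (mv (R0 u v) (puV x0 u v)))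
                           (puV t0 u v))
                     (mv (R0 u v) (puV x0 u v))); [clear; vec_ring |].
  rewrite Eu. clear; vec_ring.
Qed.

Lemma deformation_translation_pv u v : D0 u v ->
  vadd (mv (pvM R0 u v) (x0 u v)) (pvV t0 u v) = vzero.
Proof.
  intros Huv. destruct Hdef as [HR [Ht Hd]]. destruct (Hd u v Huv) as [_ [_ Ev]].
  rewrite (pvV_unique (fun a b => vadd (mv (R0 a b) (x0 a b)) (t0 a b)) u v _
            (is_derive_V_plus _ _ _ _ _
               (is_derive_V_mv _ _ _ _ _ (is_derive_M_pv D0 R0 u v HR Huv)
                                         (is_derive_V_pv D0 x0 u v Hx0 Huv))
               (is_derive_V_pv D0 t0 u v Ht Huv))) in Ev.
  transitivity (vsub (vadd (vadd (mv (pvM R0 u v) (x0 u v)) (mv (R0 u v) (pvV x0 u v)))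
                           (pvV t0 u v))
                     (mv (R0 u v) (pvV x0 u v))); [clear; vec_ring |].
  rewrite Ev. clear; vec_ring.
Qed.

Lemma deformation_skew_pu u v : D0 u v -> skew (mm (trM (R0 u v)) (puM R0 u v)).
Proof.
  intros Huv. destruct Hdef as [HR [_ Hd]]. apply skew_mm_trM.
  pose proof (is_derive_M_pu D0 R0 u v HR Huv) as dR.
  apply (is_derive_M_locally_const _ _ _ idM
           (is_derive_M_mm _ _ _ _ _ (is_derive_M_tr _ _ _ dR) dR)).
  generalize (open2_locally_u D0 u v HD0 Huv). apply filter_imp. intros s Hs.
  exact (proj1 (proj1 (Hd s v Hs))).
Qed.

Lemma deformation_skew_pv u v : D0 u v -> skew (mm (trM (R0 u v)) (pvM R0 u v)).
Proof.
  intros Huv. destruct Hdef as [HR [_ Hd]]. apply skew_mm_trM.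
  pose proof (is_derive_M_pv D0 R0 u v HR Huv) as dR.
  apply (is_derive_M_locally_const _ _ _ idM
           (is_derive_M_mm _ _ _ _ _ (is_derive_M_tr _ _ _ dR) dR)).
  generalize (open2_locally_v D0 u v HD0 Huv). apply filter_imp. intros t Ht.
  exact (proj1 (proj1 (Hd u t Ht))).
Qed.

(* Differentiate the two translation identities crosswise; the second derivatives of [R0]
   and [t0] cancel by symmetry of mixed partials. *)
Lemma deformation_compatibility u v : D0 u v ->
  mv (puM R0 u v) (pvV x0 u v) = mv (pvM R0 u v) (puV x0 u v).
Proof.
  intros Huv. destruct Hdef as [HR [Ht _]].
  assert (Gv := is_derive_V_plus _ _ _ _ _
     (is_derive_V_mv _ _ _ _ _ (is_derive_M_pv D0 (puM R0) u v (holoM_pu D0 R0 HR) Huv)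
                               (is_derive_V_pv D0 x0 u v Hx0 Huv))
     (is_derive_V_pv D0 (puV t0) u v (holoV_pu D0 t0 Ht) Huv)).
  apply is_derive_V_locally_const with (c := vzero) in Gv;
    [| generalize (open2_locally_v D0 u v HD0 Huv); apply filter_imp;
       intros t Hut; apply deformation_translation_pu, Hut].
  assert (Gu := is_derive_V_plus _ _ _ _ _
     (is_derive_V_mv _ _ _ _ _ (is_derive_M_pu D0 (pvM R0) u v (holoM_pv D0 R0 HR) Huv)
                               (is_derive_V_pu D0 x0 u v Hx0 Huv))
     (is_derive_V_pu D0 (pvV t0) u v (holoV_pv D0 t0 Ht) Huv)).
  apply is_derive_V_locally_const with (c := vzero) in Gu;
    [| generalize (open2_locally_u D0 u v HD0 Huv); apply filter_imp;
       intros s Hsv; apply deformation_translation_pv, Hsv].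
  rewrite (pvM_puM_comm D0 R0 u v HD0 HR Huv), (pvV_puV_comm D0 t0 u v HD0 Ht Huv) in Gv.
  exact (vadd_eq0_cancel _ _ _ _ Gv Gu).
Qed.

End Deformation.

Lemma is_derive_V_frame_curve D0 D1 (xz : C -> C -> V3) (R0 : C -> C -> M3) (t0 : C -> C -> V3)
  (g0 h0 g1 h1 : C -> C) s d0 e0 d1 e1 :
  holoV D1 xz -> holoM D0 R0 -> holoV D0 t0 -> D0 (g0 s) (h0 s) -> D1 (g1 s) (h1 s) ->
  is_derive g0 s d0 -> is_derive h0 s e0 -> is_derive g1 s d1 -> is_derive h1 s e1 ->
  is_derive_V (fun y => vadd (mv (R0 (g0 y) (h0 y)) (xz (g1 y) (h1 y))) (t0 (g0 y) (h0 y))) s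
    (vadd (vadd (mv (mlin d0 (puM R0 (g0 s) (h0 s)) e0 (pvM R0 (g0 s) (h0 s))) (xz (g1 s) (h1 s)))
                (mv (R0 (g0 s) (h0 s))
                    (vadd (vscal d1 (puV xz (g1 s) (h1 s))) (vscal e1 (pvV xz (g1 s) (h1 s))))))
          (vadd (vscal d0 (puV t0 (g0 s) (h0 s))) (vscal e0 (pvV t0 (g0 s) (h0 s))))).
Proof.
  intros Hxz HR Ht H0 H1 G0 K0 G1 K1.
  exact (is_derive_V_plus _ _ _ _ _
           (is_derive_V_mv _ _ _ _ _ (is_derive_M_comp D0 R0 g0 h0 s d0 e0 HR H0 G0 K0)
                                     (is_derive_V_comp D1 xz g1 h1 s d1 e1 Hxz H1 G1 K1))
           (is_derive_V_comp D0 t0 g0 h0 s d0 e0 Ht H0 G0 K0)).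
Qed.

Lemma x1_leaf_differential D0 D1 (xz : C -> C -> V3) (R0 : C -> C -> M3) (t0 : C -> C -> V3)
  (U0 V0 U1 V1 : C -> C -> C) s t al be :
  holoV D1 xz -> holoM D0 R0 -> holoV D0 t0 ->
  cdiff_at U0 s t -> cdiff_at V0 s t -> cdiff_at U1 s t -> cdiff_at V1 s t ->
  D0 (U0 s t) (V0 s t) -> D1 (U1 s t) (V1 s t) ->
  let x1 := x1_leaf xz R0 t0 U0 V0 U1 V1 in
  let d f := al * pu f s t + be * pv f s t in
  let u0 := U0 s t in let v0 := V0 s t in let u1 := U1 s t in let v1 := V1 s t in
  vadd (vscal al (puV x1 s t)) (vscal be (pvV x1 s t)) =
  vadd (vadd (mv (mlin (d U0) (puM R0 u0 v0) (d V0) (pvM R0 u0 v0)) (xz u1 v1))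
             (mv (R0 u0 v0) (vadd (vscal (d U1) (puV xz u1 v1)) (vscal (d V1) (pvV xz u1 v1)))))
       (vadd (vscal (d U0) (puV t0 u0 v0)) (vscal (d V0) (pvV t0 u0 v0))).
Proof.
  intros Hxz HR Ht HU0 HV0 HU1 HV1 H0 H1. cbv zeta.
  rewrite (puV_unique (x1_leaf xz R0 t0 U0 V0 U1 V1) s t _
             (is_derive_V_frame_curve D0 D1 xz R0 t0 (fun y => U0 y t) (fun y => V0 y t)
                (fun y => U1 y t) (fun y => V1 y t) s _ _ _ _ Hxz HR Ht H0 H1
                (cdiff_at_pu _ _ _ HU0) (cdiff_at_pu _ _ _ HV0)
                (cdiff_at_pu _ _ _ HU1) (cdiff_at_pu _ _ _ HV1))),
          (pvV_unique (x1_leaf xz R0 t0 U0 V0 U1 V1) s t _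
             (is_derive_V_frame_curve D0 D1 xz R0 t0 (fun y => U0 s y) (fun y => V0 s y)
                (fun y => U1 s y) (fun y => V1 s y) t _ _ _ _ Hxz HR Ht H0 H1
                (cdiff_at_pv _ _ _ HU0) (cdiff_at_pv _ _ _ HV0)
                (cdiff_at_pv _ _ _ HU1) (cdiff_at_pv _ _ _ HV1))).
  generalize (R0 (U0 s t) (V0 s t)) (puM R0 (U0 s t) (V0 s t)) (pvM R0 (U0 s t) (V0 s t))
             (xz (U1 s t) (V1 s t)) (puV xz (U1 s t) (V1 s t)) (pvV xz (U1 s t) (V1 s t))
             (puV t0 (U0 s t) (V0 s t)) (pvV t0 (U0 s t) (V0 s t)).
  intros. vec_ring.
Qed.

Lemma leaf_linear_element (D0 D1 : C -> C -> Prop) (x0 N0 xz : C -> C -> V3)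
  (R0 : C -> C -> M3) (t0 : C -> C -> V3) (D : C -> C -> Prop) (U0 V0 U1 V1 : C -> C -> C)
  (s t al be : C) :
  surface D0 x0 -> unit_normal D0 x0 N0 -> surface D1 xz -> deformation D0 x0 R0 t0 ->
  leaf D0 D1 x0 N0 xz R0 D U0 V0 U1 V1 -> D s t ->
  let x1 := x1_leaf xz R0 t0 U0 V0 U1 V1 in
  let dx1 := vadd (vscal al (puV x1 s t)) (vscal be (pvV x1 s t)) in
  let du1 := al * pu U1 s t + be * pv U1 s t in
  let dv1 := al * pu V1 s t + be * pv V1 s t in
  let dxz := vadd (vscal du1 (puV xz (U1 s t) (V1 s t))) (vscal dv1 (pvV xz (U1 s t) (V1 s t))) in
  dot dx1 dx1 = dot dxz dxz - RtoC 4 * Ffun N0 xz (U0 s t) (V0 s t) (U1 s t) (V1 s t) * du1 * dv1.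
Proof.
  intros [HD0 [Hx0 Hcross]] [_ Hunit] [_ [Hxz _]] Hdef [_ [HU0 [HV0 [HU1 [HV1 Hleaf]]]]] Hst.
  cbv zeta. destruct (Hleaf s t Hst) as [[H0 [H1 HS]] Hpfaff].
  pose proof Hdef as [HR [Ht Hd]].
  destruct (Hd _ _ H0) as [[HRR Hdet] _].
  destruct (Hunit _ _ H0) as [HNN [HNXu HNXv]].
  pose proof (deformation_skew_pu D0 x0 R0 t0 HD0 Hdef _ _ H0) as Hsu.
  pose proof (deformation_skew_pv D0 x0 R0 t0 HD0 Hdef _ _ H0) as Hsv.
  destruct (skew_axial_orthogonal _ _ _ _ _ Hsu Hsv
              (deformation_compatibility D0 x0 R0 t0 HD0 Hx0 Hdef _ _ H0)) as [Hwu Hwv].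
  apply (dot_unit_normal_eq0 _ _ _ _ HNN HNXu HNXv (Hcross _ _ H0)) in Hwu, Hwv.
  rewrite (x1_leaf_differential D0 D1 xz R0 t0 U0 V0 U1 V1 s t al be Hxz HR Ht
             (HU0 nil s t Hst) (HV0 nil s t Hst) (HU1 nil s t Hst) (HV1 nil s t Hst) H0 H1).
  cbv zeta.
  rewrite (frame_differential _ _ _ _ _ _ _ _ _ _ (orthogonal_mm_trM_r _ HRR Hdet) Hsu Hsv
             (deformation_translation_pu D0 x0 R0 t0 Hx0 Hdef _ _ H0)
             (deformation_translation_pv D0 x0 R0 t0 Hx0 Hdef _ _ H0)).
  apply linear_element_rotation; [exact HRR | exact HNN | | exact HS |].
  - apply dot_vadd_vscal_eq0; assumption.
  - specialize (Hpfaff al be). unfold pfaff_form, om_u, om_v in Hpfaff.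
    rewrite <- !mv_mm, !cross_skew_mv in Hpfaff by assumption.
    exact Hpfaff.
Qed.

Theorem mainTheorem3 (D0 D1 : C -> C -> Prop) (x0 N0 xz : C -> C -> V3) :
  surface D0 x0 -> unit_normal D0 x0 N0 -> nondevelopable D0 x0 N0 ->
  surface D1 xz ->
  (forall u0 v0 u1 v1, inS D0 D1 x0 N0 xz u0 v0 u1 v1 ->
     Ffun N0 xz u0 v0 u1 v1 <> RtoC 0) ->
  (forall u0 v0 u1 v1, inS D0 D1 x0 N0 xz u0 v0 u1 v1 ->
     key_identity x0 N0 xz u0 v0 u1 v1) ->
  (forall u0 v0 u1 v1 w0 w1 : C, inS D0 D1 x0 N0 xz u0 v0 u1 v1 ->
     w0 * C_derive (fun s => Sfun x0 N0 xz s v0 u1 v1) u0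
       + w1 * C_derive (fun t => Sfun x0 N0 xz u0 t u1 v1) v0 = RtoC 0 ->
     w0 * C_derive (fun s => Ffun N0 xz s v0 u1 v1) u0
       + w1 * C_derive (fun t => Ffun N0 xz u0 t u1 v1) v0 = RtoC 0)
  /\
  (forall (R0 : C -> C -> M3) (t0 : C -> C -> V3),
     deformation D0 x0 R0 t0 ->
     forall (D : C -> C -> Prop) (U0 V0 U1 V1 : C -> C -> C),
       leaf D0 D1 x0 N0 xz R0 D U0 V0 U1 V1 ->
       forall s t al be : C, D s t ->
         let x1 := x1_leaf xz R0 t0 U0 V0 U1 V1 in
         let dx1 := vadd (vscal al (puV x1 s t)) (vscal be (pvV x1 s t)) in
         let du1 := al * pu U1 s t + be * pv U1 s t in
         let dv1 := al * pu V1 s t + be * pv V1 s t in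
         let dxz := vadd (vscal du1 (puV xz (U1 s t) (V1 s t)))
                         (vscal dv1 (pvV xz (U1 s t) (V1 s t))) in
         dot dx1 dx1 =
         dot dxz dxz
         - RtoC 4 * Ffun N0 xz (U0 s t) (V0 s t) (U1 s t) (V1 s t) * du1 * dv1).
Proof.
  intros Hx0 Hunit _ Hxz _ Hkey. split.
  - intros u0 v0 u1 v1 w0 w1 Hin Hw.
    destruct Hx0 as [HD0 [Hx0 _]]. pose proof (Hkey _ _ _ _ Hin) as K. destruct Hin as [H0 _].
    rewrite (Ffun_derive_u D0 x0 N0 xz u0 v0 u1 v1 HD0 Hx0 Hunit H0 K),
            (Ffun_derive_v D0 x0 N0 xz u0 v0 u1 v1 HD0 Hx0 Hunit H0 K).
    transitivity (dot (pvV (puV xz) u1 v1) (N0 u0 v0) *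
      (w0 * C_derive (fun s => Sfun x0 N0 xz s v0 u1 v1) u0
       + w1 * C_derive (fun t => Sfun x0 N0 xz u0 t u1 v1) v0)); [ring |].
    rewrite Hw. ring.
  - intros R0 t0 Hdef D U0 V0 U1 V1 Hleaf s t al be Hst.
    exact (leaf_linear_element D0 D1 x0 N0 xz R0 t0 D U0 V0 U1 V1 s t al be
             Hx0 Hunit Hxz Hdef Hleaf Hst).
Qed.
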